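(* In the database model described in the context, assume $0<\pi_{\mathcal D}<1$ and let $\mathbf r=(r_1,\dots,r_N)$ satisfy $P(\mathbf{LR}_{\mathcal D}=\mathbf r\mid R\notin\mathcal D)>0$. Then for every subset $\mathcal D'\subseteq\{1,\dots,N\}$, \[ P(R\in\mathcal D'\mid \mathbf{LR}_{\mathcal D}=\mathbf r)=\frac{\sum_{i\in\mathcal D'}r_i\pi_i}{\pi_0+\sum_{k=1}^N r_k\pi_k}, \] and \[ \frac{P(\mathbf{LR}_{\mathcal D}=\mathbf r\mid R\in\mathcal D)}{P(\mathbf{LR}_{\mathcal D}=\mathbf r\mid R\notin\mathcal D)}=\frac{\sum_{i=1}^N r_i\pi_i}{\pi_{\mathcal D}}. \] In particular, if $\pi_i=\pi_{\mathcal D}/N$ for all $1\le i\le N$, this likelihood ratio equals $\frac1N\sum_{i=1}^N r_i$.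
   Context: Let $E$ be a countable set and let $S$, $G$ be $E$-valued random variables such that for every $e\in E$, $P(S=e)>0$ implies $P(G=e)>0$. For $e\in E$ define the likelihood ratio $LR(e)=P(S=e)/P(G=e)$ if $P(G=e)>0$ and $LR(e)=0$ otherwise. Database model: fix $N\ge1$. Let $R$ be a random variable with values in $\{0,1,\dots,N\}$; we write $R\in\mathcal D$ for $R\in\{1,\dots,N\}$ and $R\notin\mathcal D$ for $R=0$. Put $\pi_i=P(R=i)$ for $1\le i\le N$, $\pi_{\mathcal D}=\sum_{i=1}^N\pi_i$ and $\pi_0=1-\pi_{\mathcal D}=P(R=0)$. There are $E$-valued random variables $P_1,\dots,P_N$ such that conditionally on $R=i$ with $1\le i\le N$, they are independent, $P_i$ has the distribution of $S$ and $P_j$ ($j\ne i$) has the distribution of $G$; and conditionally on $R=0$ they are independent, each with the distribution of $G$. Set $\mathbf{LR}_{\mathcal D}=(LR(P_1),\dots,LR(P_N))$. *)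

From Stdlib Require Import Reals ClassicalEpsilon.
Open Scope R_scope.

(* E is identified with nat (any countable set injects into nat; extra points
   get probability 0).  A probability mass function on E. *)
Record is_pmf (p : nat -> R) : Prop := {
  pmf_nonneg : forall e, 0 <= p e;
  pmf_sum1 : infinite_sum p 1
}.

Definition mass (p : nat -> R) (A : nat -> Prop) : R :=
  epsilon (inhabits 0)
    (fun l => infinite_sum
       (fun e => if excluded_middle_informative (A e) then p e else 0) l).

Definition LR (pS pG : nat -> R) (e : nat) : R :=
  if Rlt_dec 0 (pG e) then pS e / pG e else 0.

Fixpoint sum1 (n : nat) (f : nat -> R) : R :=
  match n with O => 0 | S m => sum1 m f + f (S m) end.
Fixpoint prod1 (n : nat) (f : nat -> R) : R :=
  match n with O => 1 | S m => prod1 m f * f (S m) end.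

Record is_prob {Omega : Type} (Pr : (Omega -> Prop) -> R) : Prop := {
  prob_nonneg : forall A, 0 <= Pr A;
  prob_full : Pr (fun _ => True) = 1;
  prob_add : forall A B, (forall w, ~ (A w /\ B w)) ->
      Pr (fun w => A w \/ B w) = Pr A + Pr B;
  prob_ext : forall A B, (forall w, A w <-> B w) -> Pr A = Pr B
}.

Definition condP {Omega : Type} (Pr : (Omega -> Prop) -> R)
  (A B : Omega -> Prop) : R :=
  Pr (fun w => A w /\ B w) / Pr B.

(* Conditionally on R = i
   (1 <= i <= N) the P_j are independent, P_i ~ S and P_j ~ G (j <> i);
   conditionally on R = 0 they are independent, all ~ G.  Stated on all
   rectangle events {P_1 in A_1, ..., P_N in A_N}. *)
Definition database_model {Omega : Type} (Pr : (Omega -> Prop) -> R)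
  (N : nat) (pS pG : nat -> R) (Rv : Omega -> nat) (P : nat -> Omega -> nat)
  : Prop :=
  (forall w, (Rv w <= N)%nat) /\
  (forall (i : nat) (A : nat -> nat -> Prop), (i <= N)%nat ->
     Pr (fun w => Rv w = i /\ forall j, (1 <= j <= N)%nat -> A j (P j w))
     = Pr (fun w => Rv w = i) *
       prod1 N (fun j => mass (if Nat.eqb i j then pS else pG) (A j))).

Definition LR_event {Omega : Type} (N : nat) (pS pG : nat -> R)
  (P : nat -> Omega -> nat) (r : nat -> R) : Omega -> Prop :=
  fun w => forall j, (1 <= j <= N)%nat -> LR pS pG (P j w) = r j.

From Stdlib Require Import Reals Lra Lia ClassicalEpsilon.
Open Scope R_scope.

(* Write q = prod_{j=1}^N P(LR(G) = r_j) for the probability of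
   the event {LR_D = r} given R = 0.  Since P(S = e) = LR(e) P(G = e), every
   level set {LR = c} has S-mass equal to c times its G-mass; hence, given
   R = i >= 1, only the i-th factor of the product changes, from
   P(LR(G) = r_i) to r_i P(LR(G) = r_i), and
       P(LR_D = r, R = i) = r_i pi_i q,      P(LR_D = r, R = 0) = pi_0 q.
   Summing these joint probabilities over the values of R (law of total
   probability) gives P(LR_D = r) = q (pi_0 + sum_k r_k pi_k) and the joint
   probabilities with {R in D'}; the hypothesis P(LR_D = r | R = 0) > 0 says
   q > 0, and both formulas follow by cancelling q. *)

Lemma sum1_ext n f g :
  (forall i, (1 <= i <= n)%nat -> f i = g i) -> sum1 n f = sum1 n g.
Proof.
  induction n as [|n IH]; intros Hfg; simpl; [reflexivity|].
  rewrite IH by (intros; apply Hfg; lia).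
  rewrite (Hfg (S n)) by lia; reflexivity.
Qed.

Lemma sum1_scal n c f : sum1 n (fun i => c * f i) = c * sum1 n f.
Proof. induction n as [|n IH]; simpl; [ring|]. rewrite IH; ring. Qed.

Lemma prod1_ext n f g :
  (forall i, (1 <= i <= n)%nat -> f i = g i) -> prod1 n f = prod1 n g.
Proof.
  induction n as [|n IH]; intros Hfg; simpl; [reflexivity|].
  rewrite IH by (intros; apply Hfg; lia).
  rewrite (Hfg (S n)) by lia; reflexivity.
Qed.

Lemma prod1_change_one n F G c i :
  (1 <= i <= n)%nat -> (forall j, j <> i -> F j = G j) ->
  F i = c * G i -> prod1 n F = c * prod1 n G.
Proof.
  induction n as [|n IH]; intros Hi HFG Hc; [lia|]. simpl.
  destruct (Nat.eq_dec i (S n)) as [->|Hne].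
  - rewrite (prod1_ext n F G) by (intros; apply HFG; lia).
    rewrite Hc; ring.
  - rewrite IH by (auto; lia). rewrite HFG by auto. ring.
Qed.

Lemma sum1_uniform_average n (pi r : nat -> R) c :
  (1 <= n)%nat -> c <> 0 -> (forall i, (1 <= i <= n)%nat -> pi i = c / INR n) ->
  sum1 n (fun i => r i * pi i) / c = / INR n * sum1 n r.
Proof.
  intros Hn Hc Hpi.
  rewrite (sum1_ext n _ (fun i => c / INR n * r i)) by (intros i Hi; rewrite Hpi by exact Hi; ring).
  rewrite sum1_scal.
  assert (0 < INR n) by (apply lt_0_INR; lia).
  field; lra.
Qed.

Definition restrict (p : nat -> R) (A : nat -> Prop) (e : nat) : R :=
  if excluded_middle_informative (A e) then p e else 0.

Lemma mass_eq p A l : infinite_sum (restrict p A) l -> mass p A = l.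
Proof.
  intros Hl. unfold mass.
  apply (uniqueness_sum (restrict p A)); [|exact Hl].
  apply (epsilon_spec (inhabits 0) (fun l0 => infinite_sum (restrict p A) l0)).
  exists l; exact Hl.
Qed.

(* Every set has a mass: the restricted series is dominated by p. *)
Lemma restrict_summable p A : is_pmf p -> exists l, infinite_sum (restrict p A) l.
Proof.
  intros Hp.
  destruct (Rseries_CV_comp (restrict p A) p) as [l Hl].
  - intro e; unfold restrict; destruct excluded_middle_informative;
      pose proof (pmf_nonneg _ Hp e); lra.
  - exists 1; exact (pmf_sum1 _ Hp).
  - exists l; exact Hl.
Qed.

Lemma infinite_sum_scal a l c :
  infinite_sum a l -> infinite_sum (fun e => c * a e) (c * l).
Proof.
  intros Hl.
  apply (Un_cv_ext (fun n => c * sum_f_R0 a n)).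
  - intro n. rewrite scal_sum. apply sum_eq; intros; ring.
  - apply (CV_mult (fun _ => c) (sum_f_R0 a)); [|exact Hl].
    intros eps Heps; exists 0%nat; intros n _; rewrite Rdist_eq; lra.
Qed.

(* The likelihood ratio recovers the S-probabilities from the G-ones; this
   uses the support hypothesis where P(G = e) = 0. *)
Lemma pS_eq_LR_pG pS pG e :
  is_pmf pS -> (forall e, 0 < pS e -> 0 < pG e) -> pS e = LR pS pG e * pG e.
Proof.
  intros HS Hsupp. unfold LR.
  destruct (Rlt_dec 0 (pG e)) as [Hpos|Hnpos].
  - field; lra.
  - destruct (pmf_nonneg _ HS e) as [Hp|Hp].
    + exfalso; exact (Hnpos (Hsupp e Hp)).
    + rewrite <- Hp; ring.
Qed.

Lemma mass_LR_level pS pG c :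
  is_pmf pS -> is_pmf pG -> (forall e, 0 < pS e -> 0 < pG e) ->
  mass pS (fun e => LR pS pG e = c) = c * mass pG (fun e => LR pS pG e = c).
Proof.
  intros HS HG Hsupp.
  destruct (restrict_summable pG (fun e => LR pS pG e = c) HG) as [l Hl].
  rewrite (mass_eq _ _ l Hl). apply mass_eq.
  apply (Un_cv_ext (sum_f_R0 (fun e => c * restrict pG (fun e => LR pS pG e = c) e))).
  - intro n; apply sum_eq; intros e _. unfold restrict.
    destruct excluded_middle_informative as [Hc|]; [|ring].
    rewrite (pS_eq_LR_pG pS pG e HS Hsupp), Hc; ring.
  - exact (infinite_sum_scal _ _ c Hl).
Qed.

Section TotalProbability.

Variables (Omega : Type) (Pr : (Omega -> Prop) -> R).
Hypothesis HPr : is_prob Pr.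

Lemma prob_empty A : (forall w, ~ A w) -> Pr A = 0.
Proof.
  intros HA.
  pose proof (prob_add _ HPr A A (fun w H => HA w (proj1 H))) as Hadd.
  rewrite (prob_ext _ HPr (fun w => A w \/ A w) A) in Hadd by (intro; tauto).
  lra.
Qed.

Variable Rv : Omega -> nat.

Definition prior (i : nat) : R := Pr (fun w => Rv w = i).

Lemma total_probability F n :
  Pr (fun w => F w /\ (Rv w <= n)%nat) =
  Pr (fun w => F w /\ Rv w = 0%nat) + sum1 n (fun i => Pr (fun w => F w /\ Rv w = i)).
Proof.
  induction n as [|n IH]; simpl.
  - rewrite Rplus_0_r. apply (prob_ext _ HPr).
    intro w; split; intros [? ?]; split; auto; lia.
  - rewrite <- Rplus_assoc, <- IH, <- (prob_add _ HPr).
    + apply (prob_ext _ HPr). intro w; split.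
      * intros [HF Hle]. destruct (Nat.eq_dec (Rv w) (S n)); [right|left]; split; auto; lia.
      * intros [[? ?]|[? ?]]; split; auto; lia.
    + intros w [[_ ?] [_ ?]]; lia.
Qed.

Lemma total_probability_positive F n :
  (forall w, (Rv w <= n)%nat) ->
  Pr (fun w => F w /\ (1 <= Rv w)%nat) = sum1 n (fun i => Pr (fun w => F w /\ Rv w = i)).
Proof.
  intros Hbound.
  pose proof (total_probability (fun w => F w /\ (1 <= Rv w)%nat) n) as Htot.
  rewrite (prob_ext _ HPr _ (fun w => F w /\ (1 <= Rv w)%nat)) in Htot
    by (intro w; split; [tauto | split; auto]).
  rewrite (prob_empty (fun w => (F w /\ (1 <= Rv w)%nat) /\ Rv w = 0%nat)) in Htot
    by (intros w [[_ ?] ?]; lia).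
  rewrite Htot, Rplus_0_l. apply sum1_ext; intros i Hi.
  apply (prob_ext _ HPr). intro w; split; [tauto|].
  intros [? ?]; repeat split; auto; lia.
Qed.

Lemma prior_zero n :
  (forall w, (Rv w <= n)%nat) -> prior 0 = 1 - sum1 n prior.
Proof.
  intros Hbound.
  pose proof (total_probability (fun _ => True) n) as Htot.
  rewrite (prob_ext _ HPr _ (fun _ => True)), (prob_full _ HPr) in Htot
    by (intro w; split; auto).
  rewrite (prob_ext _ HPr (fun w => True /\ Rv w = 0%nat) (fun w => Rv w = 0%nat)) in Htot
    by (intro; tauto).
  rewrite (sum1_ext n _ prior) in Htot
    by (intros i _; apply (prob_ext _ HPr); intro; tauto).
  unfold prior at 1; lra.
Qed.

Lemma prob_positive n :
  (forall w, (Rv w <= n)%nat) -> Pr (fun w => (1 <= Rv w)%nat) = sum1 n prior.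
Proof.
  intros Hbound.
  rewrite (prob_ext _ HPr _ (fun w => True /\ (1 <= Rv w)%nat)) by (intro; tauto).
  rewrite (total_probability_positive _ n Hbound).
  apply sum1_ext; intros i _. apply (prob_ext _ HPr); intro; tauto.
Qed.

End TotalProbability.

Section DatabaseModel.

Variables (Omega : Type) (Pr : (Omega -> Prop) -> R) (N : nat)
  (pS pG : nat -> R) (Rv : Omega -> nat) (P : nat -> Omega -> nat) (r : nat -> R).
Hypothesis HPr : is_prob Pr.
Hypotheses (HS : is_pmf pS) (HG : is_pmf pG).
Hypothesis Hsupp : forall e, 0 < pS e -> 0 < pG e.
Hypothesis Hbound : forall w, (Rv w <= N)%nat.
Hypothesis Hrect : forall (i : nat) (A : nat -> nat -> Prop), (i <= N)%nat ->
  Pr (fun w => Rv w = i /\ forall j, (1 <= j <= N)%nat -> A j (P j w))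
  = Pr (fun w => Rv w = i) *
    prod1 N (fun j => mass (if Nat.eqb i j then pS else pG) (A j)).

Definition null_likelihood : R :=
  prod1 N (fun j => mass pG (fun e => LR pS pG e = r j)).

Local Notation prior := (prior Omega Pr Rv).
Let L := LR_event N pS pG P r.

Lemma joint_rect i :
  (i <= N)%nat ->
  Pr (fun w => L w /\ Rv w = i) =
  prior i * prod1 N (fun j => mass (if Nat.eqb i j then pS else pG)
                                   (fun e => LR pS pG e = r j)).
Proof.
  intros Hi. unfold prior. rewrite <- (Hrect i (fun j e => LR pS pG e = r j) Hi).
  apply (prob_ext _ HPr). intro w; unfold L, LR_event; tauto.
Qed.

(* Outside the database every factor is a G-mass. *)
Lemma joint_null : Pr (fun w => L w /\ Rv w = 0%nat) = prior 0 * null_likelihood.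
Proof.
  rewrite joint_rect by lia. f_equal.
  apply prod1_ext; intros [|j] Hj; [lia | reflexivity].
Qed.

Lemma joint_match i :
  (1 <= i <= N)%nat ->
  Pr (fun w => L w /\ Rv w = i) = r i * prior i * null_likelihood.
Proof.
  intros Hi. rewrite joint_rect by lia. unfold null_likelihood.
  rewrite (prod1_change_one N _ (fun j => mass pG (fun e => LR pS pG e = r j)) (r i) i Hi);
    [ring| |].
  - intros j Hj. apply not_eq_sym, Nat.eqb_neq in Hj. rewrite Hj; reflexivity.
  - rewrite Nat.eqb_refl. apply mass_LR_level; assumption.
Qed.

Lemma cond_null : 0 < prior 0 -> condP Pr L (fun w => Rv w = 0%nat) = null_likelihood.
Proof.
  intros Hpos. unfold condP. rewrite joint_null. unfold prior in *. field; lra.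
Qed.

Lemma cond_in_database :
  condP Pr L (fun w => (1 <= Rv w)%nat) =
  null_likelihood * sum1 N (fun i => r i * prior i) / sum1 N prior.
Proof.
  unfold condP.
  rewrite (total_probability_positive Omega Pr HPr Rv L N Hbound).
  rewrite (prob_positive Omega Pr HPr Rv N Hbound), <- sum1_scal.
  f_equal. apply sum1_ext; intros i Hi. rewrite joint_match by exact Hi; ring.
Qed.

Lemma prob_LR_event :
  Pr L = null_likelihood * (prior 0 + sum1 N (fun k => r k * prior k)).
Proof.
  pose proof (total_probability Omega Pr HPr Rv L N) as Htot.
  rewrite (prob_ext _ HPr _ L) in Htot by (intro w; split; [tauto | split; auto]).
  rewrite Htot, joint_null, (sum1_ext N _ (fun i => null_likelihood * (r i * prior i))),
    sum1_scal by (intros i Hi; rewrite joint_match by exact Hi; ring).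
  ring.
Qed.

Lemma posterior_subset (D' : nat -> bool) :
  (forall i, D' i = true -> (1 <= i <= N)%nat) -> 0 < null_likelihood ->
  condP Pr (fun w => D' (Rv w) = true) L =
  sum1 N (fun i => if D' i then r i * prior i else 0)
  / (prior 0 + sum1 N (fun k => r k * prior k)).
Proof.
  intros HD' Hq. unfold condP.
  assert (Hjoint : Pr (fun w => D' (Rv w) = true /\ L w) =
                   null_likelihood * sum1 N (fun i => if D' i then r i * prior i else 0)).
  { rewrite (prob_ext _ HPr _ (fun w => (L w /\ D' (Rv w) = true) /\ (1 <= Rv w)%nat))
      by (intro w; split; [intros [Hd HL]; pose proof (HD' _ Hd); tauto | tauto]).
    rewrite (total_probability_positive Omega Pr HPr Rv _ N Hbound), <- sum1_scal.
    apply sum1_ext; intros i Hi. destruct (D' i) eqn:Hd.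
    - transitivity (Pr (fun w => L w /\ Rv w = i)).
      + apply (prob_ext _ HPr); intro w; split; [tauto|].
        intros [HL Hr]; rewrite Hr; auto.
      + rewrite joint_match by exact Hi; ring.
    - rewrite Rmult_0_r. apply (prob_empty _ _ HPr).
      intros w [[_ Hd'] Hr]. rewrite Hr, Hd in Hd'. discriminate. }
  rewrite Hjoint, prob_LR_event. apply Rdiv_mult_l_l; lra.
Qed.

End DatabaseModel.

Theorem mainTheorem3
  (Omega : Type) (Pr : (Omega -> Prop) -> R) (N : nat)
  (pS pG : nat -> R) (Rv : Omega -> nat) (P : nat -> Omega -> nat)
  (r : nat -> R)
  (HN : (1 <= N)%nat)
  (HPr : is_prob Pr)
  (HS : is_pmf pS) (HG : is_pmf pG)
  (Hsupp : forall e, 0 < pS e -> 0 < pG e)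
  (Hmodel : database_model Pr N pS pG Rv P) :
  let pi := fun i => Pr (fun w => Rv w = i) in
  let piD := sum1 N pi in
  let pi0 := 1 - piD in
  0 < piD < 1 ->
  condP Pr (LR_event N pS pG P r) (fun w => Rv w = 0%nat) > 0 ->
  (forall D' : nat -> bool, (forall i, D' i = true -> (1 <= i <= N)%nat) ->
     condP Pr (fun w => D' (Rv w) = true) (LR_event N pS pG P r)
     = sum1 N (fun i => if D' i then r i * pi i else 0)
       / (pi0 + sum1 N (fun k => r k * pi k)))
  /\
  condP Pr (LR_event N pS pG P r) (fun w => (1 <= Rv w)%nat)
    / condP Pr (LR_event N pS pG P r) (fun w => Rv w = 0%nat)
    = sum1 N (fun i => r i * pi i) / piD
  /\
  ((forall i, (1 <= i <= N)%nat -> pi i = piD / INR N) ->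
   condP Pr (LR_event N pS pG P r) (fun w => (1 <= Rv w)%nat)
    / condP Pr (LR_event N pS pG P r) (fun w => Rv w = 0%nat)
    = / INR N * sum1 N r).
Proof.
  intros pi piD pi0 HpiD Hcond.
  destruct Hmodel as [Hbound Hrect].
  change pi with (prior Omega Pr Rv) in *.
  pose proof (prior_zero Omega Pr HPr Rv N Hbound) as Hpi0.
  assert (Hpi0_pos : 0 < prior Omega Pr Rv 0) by (unfold piD in HpiD; lra).
  rewrite cond_null in Hcond by assumption.
  assert (Hratio :
    condP Pr (LR_event N pS pG P r) (fun w => (1 <= Rv w)%nat)
    / condP Pr (LR_event N pS pG P r) (fun w => Rv w = 0%nat)
    = sum1 N (fun i => r i * prior Omega Pr Rv i) / piD).
  { rewrite cond_null, cond_in_database by assumption.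
    unfold piD in *; field; split; lra. }
  split; [|split].
  - intros D' HD'. unfold pi0, piD; rewrite <- Hpi0.
    apply posterior_subset; assumption.
  - exact Hratio.
  - intros Huniform. rewrite Hratio.
    apply sum1_uniform_average; [exact HN | lra | exact Huniform].
Qed.
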